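(* Let $P$ be a subgroup of $I_K(\mathfrak{n})$ with $P_{K,1}(\mathfrak{n})\subseteq P\subseteq P_K(\mathfrak{n})$ and let $\Gamma$ be any subgroup of $\mathrm{SL}_2(\mathbb{Z})$. Suppose the map $\phi_\Gamma:\mathcal{Q}_N(d_K)/\sim_\Gamma\to I_K(\mathfrak{n})/P$, $[Q]\mapsto[[\omega_Q,1]]$, is well defined (i.e. $Q\sim_\Gamma Q'$ implies $[\omega_Q,1]P=[\omega_{Q'},1]P$). Then $\phi_\Gamma$ is surjective.
   Context: Let $K$ be an imaginary quadratic field with discriminant $d_K$ and ring of integers $\mathcal{O}_K$. Let $N$ be a positive integer and $\mathfrak{n}=N\mathcal{O}_K$. $I_K(\mathfrak{n})$ denotes the group of fractional ideals of $K$ relatively prime to $\mathfrak{n}$, $P_K(\mathfrak{n})$ its subgroup of principal fractional ideals, and $P_{K,1}(\mathfrak{n})=\{\nu\mathcal{O}_K:\nu\in K^*,\ \nu\equiv^*1\pmod{\mathfrak{n}}\}$, where $\equiv^*$ is multiplicative congruence. $\mathcal{Q}(d_K)$ is the set of primitive positive definite binary quadratic forms $ax^2+bxy+cy^2\in\mathbb{Z}[x,y]$ with $b^2-4ac=d_K$, and $\mathcal{Q}_N(d_K)=\{ax^2+bxy+cy^2\in\mathcal{Q}(d_K):\gcd(N,a)=1\}$. For $Q=ax^2+bxy+cy^2\in\mathcal{Q}(d_K)$, $\omega_Q=(-b+\sqrt{d_K})/(2a)\in\mathbb{H}$ and $[\omega_Q,1]=\mathbb{Z}\omega_Q+\mathbb{Z}$,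 which is a fractional ideal of $K$ lying in $I_K(\mathfrak{n})$ when $Q\in\mathcal{Q}_N(d_K)$. For $\gamma\in\mathrm{SL}_2(\mathbb{Z})$, $Q^\gamma(x,y)=Q(\gamma\,(x,y)^T)$. For a subgroup $\Gamma\subseteq\mathrm{SL}_2(\mathbb{Z})$, the relation $\sim_\Gamma$ on $\mathcal{Q}_N(d_K)$ is: $Q\sim_\Gamma Q'$ iff $Q'=Q^\gamma$ for some $\gamma\in\Gamma$. *)

(* K = Q(sqrt d) realised inside algC. *)
From HB Require Import structures.
From mathcomp Require Import all_boot all_order all_algebra all_field.
Set Implicit Arguments. Unset Strict Implicit. Unset Printing Implicit Defensive.
Import Order.TTheory GRing.Theory Num.Theory.
Local Open Scope ring_scope.

Definition sqfree (n : nat) : Prop := forall p : nat, prime p -> ~~ (p * p %| n)%N.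

Definition imag_quad_disc (d : int) : Prop :=
  d < 0 /\
  ((d %% 4 = 1)%Z /\ sqfree `|d|%N \/
   exists m : int, d = 4 * m /\ ((m %% 4 = 2)%Z \/ (m %% 4 = 3)%Z) /\ sqfree `|m|%N).

Definition sqd (d : int) : algC := sqrtC (d%:~R).

Definition inK (d : int) (x : algC) : Prop :=
  exists a b : rat, x = ratr a + ratr b * sqd d.
Definition inOK (d : int) (x : algC) : Prop := inK d x /\ x \in Aint.

Definition cset := algC -> Prop.

Definition is_frac_ideal (d : int) (I : cset) : Prop :=
  (forall x, I x -> inK d x) /\ I 0 /\ (exists x, I x /\ x != 0) /\
  (forall x y, I x -> I y -> I (x + y)) /\
  (forall r x, inOK d r -> I x -> I (r * x)) /\
  (exists c, inOK d c /\ c != 0 /\ forall x, I x -> inOK d (c * x)).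

Definition imul (I J : cset) : cset := fun x =>
  exists s : seq (algC * algC),
    (forall p, p \in s -> I p.1 /\ J p.2) /\ x = \sum_(p <- s) p.1 * p.2.

Definition principal (d : int) (nu : algC) : cset :=
  fun x => exists y, inOK d y /\ x = nu * y.

Definition integral_coprime (d : int) (N : nat) (B : cset) : Prop :=
  is_frac_ideal d B /\ (forall x, B x -> inOK d x) /\
  exists x y, B x /\ inOK d y /\ x + N%:R * y = 1.

Definition in_IKn (d : int) (N : nat) (A : cset) : Prop :=
  is_frac_ideal d A /\
  exists B C, integral_coprime d N B /\ integral_coprime d N C /\ imul A C = B.

Definition iinv (d : int) (A : cset) : cset :=
  fun x => inK d x /\ forall y, A y -> inOK d (x * y).

Definition mcong1 (d : int) (N : nat) (nu : algC) : Prop :=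
  exists al be, inOK d al /\ inOK d be /\ be != 0 /\ nu = al / be /\
    (exists u v, inOK d u /\ inOK d v /\ be * u + N%:R * v = 1) /\
    (exists g, inOK d g /\ al - be = N%:R * g).

Definition in_PKn (d : int) (N : nat) (A : cset) : Prop :=
  in_IKn d N A /\ exists nu, inK d nu /\ nu != 0 /\ A = principal d nu.
Definition in_PK1n (d : int) (N : nat) (A : cset) : Prop :=
  exists nu, inK d nu /\ nu != 0 /\ mcong1 d N nu /\ A = principal d nu.

Definition ideal_subgroup (d : int) (N : nat) (P : cset -> Prop) : Prop :=
  (forall A, P A -> in_IKn d N A) /\ P (inOK d) /\
  (forall A B, P A -> P B -> P (imul A B)) /\
  (forall A, P A -> P (iinv d A)).

(* binary quadratic forms a x^2 + b x y + c y^2 *)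
Definition bqf := (int * int * int)%type.
Definition fa (Q : bqf) : int := Q.1.1.
Definition fb (Q : bqf) : int := Q.1.2.
Definition fc (Q : bqf) : int := Q.2.

Definition in_Qd (d : int) (Q : bqf) : Prop :=
  fb Q ^+ 2 - 4 * fa Q * fc Q = d /\ 0 < fa Q /\
  gcdz (fa Q) (gcdz (fb Q) (fc Q)) = 1.
Definition in_QNd (d : int) (N : nat) (Q : bqf) : Prop :=
  in_Qd d Q /\ gcdz (N%:Z) (fa Q) = 1.

Definition omegaQ (d : int) (Q : bqf) : algC :=
  ((- fb Q)%:~R + sqd d) / (2 * fa Q)%:~R.

Definition lattice1 (w : algC) : cset :=
  fun x => exists m n : int, x = m%:~R * w + n%:~R.

(* Q^gamma (x,y) = Q (gamma (x,y)^T), gamma = [[p,q],[r,s]] *)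
Definition g00 (g : 'M[int]_2) := g ord0 ord0.
Definition g01 (g : 'M[int]_2) := g ord0 ord_max.
Definition g10 (g : 'M[int]_2) := g ord_max ord0.
Definition g11 (g : 'M[int]_2) := g ord_max ord_max.
Definition form_act (Q : bqf) (g : 'M[int]_2) : bqf :=
  let a := fa Q in let b := fb Q in let c := fc Q in
  let p := g00 g in let q := g01 g in let r := g10 g in let s := g11 g in
  (a * p ^+ 2 + b * p * r + c * r ^+ 2,
   2 * a * p * q + b * (p * s + q * r) + 2 * c * r * s,
   a * q ^+ 2 + b * q * s + c * s ^+ 2).

Definition SL2_subgroup (G : 'M[int]_2 -> Prop) : Prop :=
  (forall g, G g -> \det g = 1) /\ G 1%:M /\
  (forall g h, G g -> G h -> G (g *m h)) /\
  (forall g, G g -> G (invmx g)).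

Definition equivG (G : 'M[int]_2 -> Prop) (Q Q' : bqf) : Prop :=
  exists g, G g /\ Q' = form_act Q g.

From HB Require Import structures.
From mathcomp Require Import all_boot all_order all_algebra all_field zify ring lra.
From Stdlib Require Import Classical FunctionalExtensionality PropExtensionality.
Import Order.TTheory GRing.Theory Num.Theory.
Local Open Scope ring_scope.

(* Given A in I_K(n) we build a form Q in Q_N(d_K) whose lattice [omega_Q, 1]
   is nu A with nu O_K in P_{K,1}(n), a subgroup of P. Pick x = 1 mod N O_K with x A integral and containing some u = 1 mod N O_K
      ([integral_multiple]).
   2. O_K = Z + Z theta ([OK_Ztheta]) and a nonzero O_K-submodule of O_K has a
      Hermite basis g [a, b + theta] with a | N(b + theta)
      ([ideal_coords_structure]); hence x A = g a [omega, 1], omega the root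
      omega_Q0 of the form Q0 = (a, -(2 b + d), c) of discriminant d
      ([integral_ideal_lattice]).
   3. Writing u = g a (p omega + q), u = 1 mod N forces g a q = 1 + N k
      ([lattice_unit_coordinate]), so gamma = [[q, -k], [-N, g a]] lies in
      SL_2(Z), Q := Q0^gamma lies in Q_N(d) ([moved_form_in_QNd]) and
      omega_Q = gamma^-1 omega ([omegaQ_form_act]).
   4. [omega_Q, 1] = D^-1 [omega, 1] with D = q + N omega ([lattice1_moebius]),
      so [omega_Q, 1] = (x / alpha) A with alpha = g a D = 1 mod N O_K
      ([denominator_cong1]), and (x / alpha) O_K is in P_{K,1}(n)
      ([cong1_quotient_PK1]). *)

Set Implicit Arguments.
Unset Strict Implicit.

Lemma int_least_positive (P : int -> Prop) :
  (exists n, 0 < n /\ P n) ->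
  exists n, 0 < n /\ P n /\ forall k, 0 < k -> P k -> n <= k.
Proof.
move=> [n0 [n0p Pn0]]; apply: NNPP => no_least.
have below : forall k : nat, forall n : int, 0 < n -> n <= k%:Z -> ~ P n.
  elim=> [|k IH] n np nk Pn; first by lia.
  apply: no_least; exists n; do 2!split => //.
  move=> k' k'p Pk'; case: (lerP n k') => // lt_k'n.
  by exfalso; apply: (IH k') => //; lia.
by apply: (below `|n0|%N n0 n0p); first by lia.
Qed.

Lemma mod_least_zero (P : int -> Prop) (a k : int) :
  0 < a -> (forall x, 0 < x -> P x -> a <= x) -> P (k %% a)%Z -> (k %% a)%Z = 0.
Proof.
move=> ap amin Pk.
have r_ge0 : 0 <= (k %% a)%Z by apply: modz_ge0; lia.
have r_lt : (k %% a)%Z < a by apply: ltz_pmod.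
case: (ltrP 0 (k %% a)%Z) => r_pos; last by lia.
by have := amin _ r_pos Pk; lia.
Qed.

Lemma int_parity (x : int) : exists s, x = 2 * s \/ x = 2 * s + 1.
Proof.
exists (x %/ 2)%Z; have := divz_eq x 2.
have := modz_ge0 x (isT : (2 : int) != 0); have := ltz_pmod x (isT : (0 : int) < 2).
by lia.
Qed.

Lemma bezout_coprimez (a b x y : int) : x * a + y * b = 1 -> coprimez a b.
Proof. by move=> h; apply/coprimezP; exists (x, y). Qed.

(** Hermite normal form of O_K-submodules of O_K = Z + Z theta, where theta is
    a root of X^2 - d X + e with 4 e = d^2 - d.  A submodule is recorded by
    the relation [J m n] <-> (m + n theta is in it); multiplication by theta
    acts on coordinates by (m, n) |-> (- n e, m + n d). *)

Lemma norm_form_pos (d e m n : int) :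
  4 * e = d * d - d -> d < 0 -> m != 0 \/ n != 0 ->
  0 < m * m + m * n * d + n * n * e.
Proof.
move=> he dneg nz.
have h4 : 4 * (m * m + m * n * d + n * n * e) = (2 * m + n * d) ^+ 2 - n * n * d.
  by rewrite mulrDr mulrDr (mulrCA 4 (n * n) e) he; ring.
have sq : 0 <= (2 * m + n * d) ^+ 2 by rewrite sqr_ge0.
case: (eqVneq n 0) => [n0 | nnz].
  have mnz : m != 0 by case: nz => //; rewrite n0.
  have : 0 < m * m by case: (ltrgt0P m) mnz => // h _; nia.
  by move: h4; rewrite n0; nia.
have : 0 < n * n by case: (ltrgt0P n) nnz => // h _; nia.
by nia.
Qed.

Section IdealCoordinates.
Variables (d e : int).
Hypotheses (he : 4 * e = d * d - d) (dneg : d < 0).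
Variable J : int -> int -> Prop.
Hypothesis Jadd : forall m n m' n', J m n -> J m' n' -> J (m + m') (n + n').
Hypothesis Jscal : forall k m n, J m n -> J (k * m) (k * n).
Hypothesis Jtheta : forall m n, J m n -> J (- (n * e)) (m + n * d).
Hypothesis Jnz : exists m n, J m n /\ (m != 0 \/ n != 0).

Let Jlin k m n k' m' n' :
  J m n -> J m' n' -> J (k * m + k' * m') (k * n + k' * n').
Proof. by move=> h h'; apply: Jadd; apply: Jscal. Qed.

(* The submodule contains a positive rational integer, namely a norm. *)
Let J_has_integer : exists k, 0 < k /\ J k 0.
Proof.
case: Jnz => m [n [Jmn nz]].
exists (m * m + m * n * d + n * n * e); split; first exact: norm_form_pos.
have := Jlin (m + n * d) (- n) Jmn (Jtheta Jmn); congr J; ring.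
Qed.

Lemma ideal_coords_structure : exists g a b c : int,
  0 < g /\ 0 < a /\ a * c = b * b + d * b + e /\
  forall m n, J m n <-> exists p q, m = g * (a * q + b * p) /\ n = g * p.
Proof.
have [a0 [a0p [Ja0 a0min]]] := int_least_positive (P := fun k => J k 0) J_has_integer.
have Ja0' : J 0 a0 by have := Jtheta Ja0; congr J; ring.
have [g [gp [[m0 Jg] gmin]]] := int_least_positive (P := fun n => exists m, J m n)
   (ex_intro _ _ (conj a0p (ex_intro _ _ Ja0'))).
have divA : forall k, J k 0 -> exists q, k = a0 * q.
  move=> k Jk; exists (k %/ a0)%Z.
  have hm : (k %% a0)%Z = 0.
    apply: (mod_least_zero a0p a0min).
    have := Jlin 1 (- (k %/ a0)%Z) Jk Ja0.
    by congr J; [rewrite {1}(divz_eq k a0); ring | ring].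
  by rewrite {1}(divz_eq k a0) hm; ring.
have divG : forall m n, J m n -> exists p, n = g * p /\ J (m - p * m0) 0.
  move=> m n Jmn.
  have Jr : J (m - (n %/ g)%Z * m0) (n %% g)%Z.
    have := Jlin 1 (- (n %/ g)%Z) Jmn Jg.
    by congr J; [ring | rewrite {1}(divz_eq n g); ring].
  have hm : (n %% g)%Z = 0.
    apply: (@mod_least_zero (fun x => exists m, J m x)) => //.
    by exists (m - (n %/ g)%Z * m0).
  exists (n %/ g)%Z; split; first by rewrite {1}(divz_eq n g) hm; ring.
  by move: Jr; rewrite hm.
have [a' [Ea' _]] := divG _ _ Ja0'.
have [b1 [Eb1 Jb1]] := divG _ _ (Jtheta Jg).
set b := b1 - d.
have Em0 : m0 = g * b by rewrite /b; lia.
have [q1 Eq1] := divA _ Jb1.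
have Ec : a' * (- q1) = b * b + d * b + e.
  apply: (mulfI (x := g)); first by lia.
  by move: Eq1; rewrite Em0 Ea' /b => H; nia.
exists g, a', b, (- q1); split => //; split; first by nia.
split => // m n; split.
- move=> Jmn; have [p [Ep Jp]] := divG _ _ Jmn.
  have [q Eq] := divA _ Jp.
  by exists p, q; split => //; move: Eq; rewrite Em0 Ea'; lia.
- move=> [p [q [-> ->]]].
  by have := Jlin q p Ja0 Jg; congr J; rewrite ?Em0 ?Ea'; ring.
Qed.

End IdealCoordinates.

Lemma sqfree_square_div (n k : int) :
  n != 0 -> sqfree `|n|%N -> 0 < k -> (k * k %| n)%Z -> k = 1.
Proof.
move=> nz sq kp dv.
have dvn : (`|k|%N * `|k|%N %| `|n|%N)%N by move: dv; rewrite /dvdz abszM.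
case: (eqVneq `|k|%N 1%N) => [k1|k1]; first by lia.
have kgt : (1 < `|k|%N)%N by lia.
have := sq _ (pdiv_prime kgt); rewrite (dvdn_trans _ dvn) //.
by apply: dvdn_mul; apply: pdiv_dvd.
Qed.

Lemma disc_square_div (d k : int) : imag_quad_disc d -> 0 < k -> (k * k %| d)%Z ->
  k = 1 \/ (k = 2 /\ exists m, d = 4 * m /\ ((m %% 4 = 2)%Z \/ (m %% 4 = 3)%Z)).
Proof.
move=> [dn [[d1 sq]|[m [Em [m4 sq]]]]] kp dv.
  by left; apply: (sqfree_square_div (n := d)) => //; lia.
have mnz : m != 0 by lia.
case: (boolP (odd `|k|%N)) => ko.
  left; apply: (sqfree_square_div (n := m)) => //.
  have cop : coprimez (k * k) 4.
    rewrite coprimezE abszM (_ : `|4|%N = (2 * 2)%N) //.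
    by rewrite coprimeMl !coprimeMr coprimen2 ko.
  by rewrite -(Gauss_dvdzl _ cop) mulrC -Em.
right.
have [k' Ek] : exists k', k = 2 * k'.
  have [k' [Ek|Ek]] := int_parity k; exists k' => //.
  by move: ko; rewrite Ek; lia.
have dv' : (k' * k' %| m)%Z.
  by move: dv; rewrite Em Ek (_ : 2 * k' * (2 * k') = 4 * (k' * k')) ?dvdz_mul2l //; ring.
have k'1 := sqfree_square_div mnz sq (_ : 0 < k') dv'.
by split; [lia | exists m].
Qed.

(* d = 0, 1 mod 4, so theta = (d + sqrt d) / 2 has integral norm e. *)
Lemma disc_theta_norm (d : int) : imag_quad_disc d -> exists e, 4 * e = d * d - d.
Proof.
case=> _ [[d1 _]|[m [-> _]]]; last by exists (m * (4 * m - 1)); ring.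
exists ((d %/ 4)%Z * d); have := divz_eq d 4; rewrite d1.
by move: (d %/ 4)%Z => q ->; ring.
Qed.

Lemma disc_form_primitive (d a b c : int) : imag_quad_disc d ->
  b ^+ 2 - 4 * a * c = d -> gcdz a (gcdz b c) = 1.
Proof.
move=> hd Ed; set g := gcdz a (gcdz b c).
have [a1 Ea] := dvdzP (dvdz_gcdl a (gcdz b c) : (g %| a)%Z).
have [b1 Eb] := dvdzP (dvdz_trans (dvdz_gcdr a _) (dvdz_gcdl b c) : (g %| b)%Z).
have [c1 Ec] := dvdzP (dvdz_trans (dvdz_gcdr a _) (dvdz_gcdr b c) : (g %| c)%Z).
have Ed' : d = g * g * (b1 ^+ 2 - 4 * a1 * c1) by rewrite -Ed Ea Eb Ec; ring.
have gp : 0 < g.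
  rewrite lt0r (_ : 0 <= g) ?andbT //; apply/eqP => g0.
  by case: hd; rewrite Ed' g0 !mul0r ltxx.
have dvg : (g * g %| d)%Z by rewrite Ed'; apply: dvdz_mulr.
case: (disc_square_div hd gp dvg) => [//|[g2 [m [Em m4]]]].
have Em' : m = b1 ^+ 2 - 4 * a1 * c1.
  by apply: (mulfI (x := 4)) => //; rewrite -Em Ed' g2.
by have [r [Er|Er]] := int_parity b1; move: m4; rewrite Em' Er; lia.
Qed.

(* If t^2 d = U^2 - 4 V with t rational, then t is an integer n and
   U = n d mod 2: the half-integral coordinates allowed in O_K. *)
Lemma half_coords_integral (d U V : int) (t : rat) : imag_quad_disc d ->
  t ^+ 2 * d%:~R = (U ^+ 2 - 4 * V)%:~R ->
  exists n mm : int, t = n%:~R /\ U - n * d = 2 * mm.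
Proof.
move=> hd E.
set p := numq t; set q := denq t.
have qp : 0 < q := denq_gt0 t.
have Et : t = p%:~R / q%:~R by rewrite divq_num_den.
have qnz : (q%:~R : rat) != 0 by rewrite intr_eq0; lia.
have Eint : p * p * d = (U ^+ 2 - 4 * V) * (q * q).
  by apply: (intr_inj (R := rat)); rewrite !rmorphM /= -E Et; field.
have cop : coprimez (q * q) (p * p).
  rewrite coprimezE !abszM.
  by rewrite coprimeMl !coprimeMr coprime_sym (coprime_num_den t).
have dv : (q * q %| d)%Z.
  by rewrite -(Gauss_dvdzr d cop) Eint; apply: dvdz_mull; exact: dvdzz.
case: (disc_square_div hd qp dv) => [q1|[q2 [m [Em m4]]]].
- exists p; suff [mm Hmm] : exists mm, U - p * d = 2 * mm by exists mm; rewrite Et q1 divr1.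
  move: Eint; rewrite q1 mulr1 => Eint.
  have [u [Eu|Eu]] := int_parity U; have [r [Er|Er]] := int_parity p;
    rewrite Eu Er in Eint *; case: hd => dn [[d1 _]|[m [Em _]]].
  all: try by exists (u - r * d); ring.
  all: try have [k Ek] : exists k, d = 4 * k + 1
         by exists (d %/ 4)%Z; have := divz_eq d 4; lia.
  all: try by exfalso; move: Eint; rewrite ?Ek ?Em; lia.
  + by exists (u - r * d - 2 * m); rewrite Em; ring.
  + by exists (u - r * d - 2 * k); rewrite Ek; ring.
- exfalso.
  have [r Er] : exists r, p = 2 * r + 1.
    have [r [Er|Er]] := int_parity p; last by exists r.
    by have := coprime_num_den t; rewrite -/p -/q q2 Er abszM /= coprimen2 oddM.
  have Hm : m + 4 * ((r * r + r) * m) = U ^+ 2 - 4 * V.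
    by apply: (mulfI (x := 4)) => //; move: Eint; rewrite q2 Em Er; lia.
  by have [u [Eu|Eu]] := int_parity U; move: m4 Hm; rewrite Eu; lia.
Qed.

Section QuadraticField.
Variable d : int.
Hypothesis dneg : d < 0.
Local Notation w := (sqd d).

Lemma sqd_sqr : w * w = d%:~R.
Proof. by rewrite -expr2 /sqd sqrtCK. Qed.

(* As d < 0, sqrt d is not real: it is irrational and conjugation negates it. *)
Lemma sqd_irrational (r : rat) : w != ratr r.
Proof.
apply/eqP => E.
have : (0 : algC) <= w * w by rewrite E -expr2 -realEsqr; apply/Creal_Crat/Crat_rat.
by rewrite sqd_sqr ler0z; lia.
Qed.

Lemma sqd_conj : w^* = - w.
Proof.
have h : w^* * w^* = w * w by rewrite -rmorphM /= sqd_sqr rmorph_int.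
have : (w^* - w) * (w^* + w) = 0 by rewrite mulrDr !mulrBl h; ring.
move/eqP; rewrite mulf_eq0 => /orP [|]; last by rewrite addr_eq0 => /eqP.
rewrite subr_eq0 => w_real.
have : w \is Num.real by rewrite CrealE.
by rewrite realEsqr expr2 sqd_sqr ler0z; lia.
Qed.

Lemma K_coords_uniq (a b a' b' : rat) :
  ratr a + ratr b * w = ratr a' + ratr b' * w -> a = a' /\ b = b'.
Proof.
move=> E; case: (eqVneq b b') => [Eb|nb].
  by move: E; rewrite Eb => /addIr /fmorph_inj.
have nb' : (ratr (b - b') : algC) != 0 by rewrite fmorph_eq0 subr_eq0.
have := sqd_irrational ((a' - a) / (b - b')).
rewrite fmorph_div /=.
have -> : (ratr (a' - a) : algC) = ratr (b - b') * w.
  have E2 : ratr a + ratr b * w - (ratr a' + ratr b' * w) = 0 by rewrite E subrr.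
  rewrite !rmorphB /=.
  by apply/eqP; rewrite -subr_eq0; apply/eqP; rewrite -[RHS]oppr0 -E2; ring.
by rewrite mulrC mulKf // eqxx.
Qed.

Definition theta : algC := (d%:~R + w) / 2.

Lemma theta_coords (m n : int) :
  m%:~R + n%:~R * theta = ratr (m%:~R + n%:~R * d%:~R / 2) + ratr (n%:~R / 2) * w.
Proof. by rewrite /theta !(rmorphD, rmorphM, fmorphV) /= !ratr_int rmorph1; field. Qed.

Lemma theta_coords_uniq (m n m' n' : int) :
  m%:~R + n%:~R * theta = m'%:~R + n'%:~R * theta -> m = m' /\ n = n'.
Proof.
rewrite !theta_coords => /K_coords_uniq [E1 E2].
have En : n = n'.
  by apply: (intr_inj (R := rat)); move: E2 => /(congr1 ( *%R^~ 2)); rewrite !divfK.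
by split => //; move: E1; rewrite En => /addIr; exact: intr_inj.
Qed.

End QuadraticField.

Section Theta.
Variables (d e : int).
Hypothesis he : 4 * e = d * d - d.
Local Notation w := (sqd d).
Local Notation theta := (theta d).

Lemma theta_sqr : theta * theta = d%:~R * theta - e%:~R.
Proof.
have He : (e%:~R : algC) = (d%:~R * d%:~R - d%:~R) / 4.
  have := congr1 (fun z : int => z%:~R : algC) he.
  rewrite /= intrB !intrM (_ : (4%:~R : algC) = 4) // => <-.
  by field.
rewrite He /theta; apply/eqP; rewrite -subr_eq0; apply/eqP.
have -> : (d%:~R + w) / 2 * ((d%:~R + w) / 2) - (d%:~R * ((d%:~R + w) / 2)
  - (d%:~R * d%:~R - d%:~R) / 4) = (w * w - d%:~R) / 4 :> algC by field.
by rewrite sqd_sqr subrr mul0r.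
Qed.

Lemma theta_Aint : theta \in Aint.
Proof.
pose p := ('X - theta%:P) * ('X - (d%:~R - theta)%:P).
have Ep : p = 'X^2 - (d%:~R)%:P * 'X + (e%:~R)%:P.
  have gen (a b : algC) :
      ('X - a%:P) * ('X - b%:P) = 'X^2 - (a + b)%:P * 'X + (a * b)%:P.
    by rewrite polyCD polyCM; ring.
  have -> : e%:~R = theta * (d%:~R - theta) by rewrite mulrBr theta_sqr; ring.
  by rewrite /p gen; congr (_ - _%:P * _ + _); ring.
apply: (@root_monic_Aint p).
- by rewrite /p rootM root_XsubC eqxx.
- by rewrite /p rpredM // monicXsubC.
- rewrite Ep; apply/polyOverP => i.
  rewrite coefD coefB coefXn coefCM coefX coefC.
  by case: i => [|[|[|i]]] /=; rewrite ?mulr0 ?mulr1 ?subr0 ?add0r ?addr0 ?sub0r ?rpredN ?intr_int.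
Qed.

End Theta.

Section FieldClosure.
Variable d : int.
Hypothesis dneg : d < 0.
Local Notation w := (sqd d).

Lemma inK_add x y : inK d x -> inK d y -> inK d (x + y).
Proof.
move=> [a [b ->]] [a' [b' ->]]; exists (a + a'), (b + b').
by rewrite !rmorphD; ring.
Qed.

Lemma inK_mul x y : inK d x -> inK d y -> inK d (x * y).
Proof.
move=> [a [b ->]] [a' [b' ->]]; exists (a * a' + b * b' * d%:~R), (a * b' + a' * b).
by rewrite !(rmorphD, rmorphM) /= ratr_int -sqd_sqr; ring.
Qed.

Lemma inK_int (m : int) : inK d m%:~R.
Proof. by exists m%:~R, 0; rewrite rmorph0 mul0r addr0 ratr_int. Qed.

(* The inverse of a + b sqrt d is (a - b sqrt d) / (a^2 - b^2 d). *)
Lemma inK_inv x : inK d x -> inK d x^-1.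
Proof.
move=> [a [b Ex]].
case: (eqVneq x 0) => [->|xnz]; first by rewrite invr0; apply: (inK_int 0).
set n := a ^+ 2 - b ^+ 2 * d%:~R.
have Dn : ratr n = ratr a ^+ 2 - ratr b ^+ 2 * w * w :> algC.
  by rewrite /n !(rmorphB, rmorphM, rmorphXn) /= ratr_int -sqd_sqr; ring.
have nnz : n != 0.
  apply/eqP => n0; move: xnz; rewrite Ex.
  have h1 : 0 <= a ^+ 2 by apply: sqr_ge0.
  have h2 : 0 <= b ^+ 2 * (- d%:~R) by rewrite mulr_ge0 ?sqr_ge0 // oppr_ge0 lerz0; lia.
  have /eqP : a ^+ 2 = 0 by move: n0; rewrite /n; lra.
  have /eqP : b ^+ 2 * (- d%:~R) = 0 by move: n0; rewrite /n; lra.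
  rewrite mulf_eq0 !sqrf_eq0 oppr_eq0 intr_eq0 (_ : (d == 0) = false); last by apply/eqP; lia.
  by rewrite orbF => /eqP -> /eqP ->; rewrite !rmorph0 mul0r addr0 eqxx.
have nnz' : (ratr n : algC) != 0 by rewrite fmorph_eq0.
exists (a / n), (- b / n); apply: (mulfI xnz); rewrite mulfV //.
rewrite Ex !(rmorphM, fmorphV, rmorphN) /=; apply/eqP; rewrite eq_sym -subr_eq0; apply/eqP.
have -> : (ratr a + ratr b * w) * (ratr a * (ratr n)^-1 + - ratr b * (ratr n)^-1 * w) - 1
  = (ratr a ^+ 2 - ratr b ^+ 2 * w * w - ratr n) / ratr n :> algC by field.
by rewrite Dn subrr mul0r.
Qed.

Lemma inK_div x y : inK d x -> inK d y -> inK d (x / y).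
Proof. by move=> hx hy; apply: inK_mul => //; apply: inK_inv. Qed.

Lemma inOK_add x y : inOK d x -> inOK d y -> inOK d (x + y).
Proof. by move=> [kx ax] [ky ay]; split; [apply: inK_add | apply: rpredD]. Qed.

Lemma inOK_mul x y : inOK d x -> inOK d y -> inOK d (x * y).
Proof. by move=> [kx ax] [ky ay]; split; [apply: inK_mul | apply: rpredM]. Qed.

Lemma inOK_int (m : int) : inOK d m%:~R.
Proof. by split; [apply: inK_int | apply: Aint_int]. Qed.

Lemma inOK_opp x : inOK d x -> inOK d (- x).
Proof. by move=> hx; rewrite -mulN1r; apply: inOK_mul => //; apply: (inOK_int (-1)). Qed.

End FieldClosure.

Section IntegerRing.
Variables (d e : int).
Hypotheses (hd : imag_quad_disc d) (he : 4 * e = d * d - d).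
Local Notation w := (sqd d).
Let dneg : d < 0. Proof. by case: hd. Qed.

(* O_K = Z + Z theta: an algebraic integer a + b sqrt d has rational trace 2a
   and norm a^2 - b^2 d, hence integral ones, and [half_coords_integral]
   concludes. *)
Lemma OK_Ztheta (x : algC) :
  inOK d x <-> exists m n : int, x = m%:~R + n%:~R * theta d.
Proof.
split; last first.
  move=> [m [n ->]]; apply: inOK_add; first exact: inOK_int.
  apply: inOK_mul; first exact: inOK_int.
  split; last exact: theta_Aint he.
  by have := @theta_coords d 0 1; rewrite mul1r add0r => ->; eexists; eexists.
move=> [[a [b Ex]] xA].
have xJ : x^* = ratr a - ratr b * w.
  by rewrite Ex rmorphD /= (conj_Crat (Crat_rat a)) rmorphM /= (conj_Crat (Crat_rat b)) sqd_conj //; ring.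
have xJA : x^* \in Aint by rewrite Aint_aut.
have rat_int (r : rat) : (ratr r : algC) \in Aint -> exists U : int, r = U%:~R.
  move=> rA; have /intrP [U HU] : (ratr r : algC) \is a Num.int.
    by apply: Cint_rat_Aint; [apply: Crat_rat | ].
  by exists U; move: HU; rewrite -(ratr_int _ U) => /fmorph_inj.
have [U EU] : exists U : int, 2 * a = U%:~R.
  apply: rat_int; have -> : ratr (2 * a) = x + x^* by rewrite xJ Ex rmorphM /= (ratr_nat _ 2); ring.
  by rewrite rpredD.
have [V EV] : exists V : int, a ^+ 2 - b ^+ 2 * d%:~R = V%:~R.
  apply: rat_int; have -> : ratr (a ^+ 2 - b ^+ 2 * d%:~R) = x * x^*.
    by rewrite xJ Ex !(rmorphB, rmorphM, rmorphXn) /= ratr_int -sqd_sqr; ring.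
  by rewrite rpredM.
have Et : (2 * b) ^+ 2 * d%:~R = (U ^+ 2 - 4 * V)%:~R.
  by rewrite intrB intrM -EV rmorphXn /= -EU; ring.
have [n [mm [En Emm]]] := half_coords_integral hd Et.
exists mm, n; rewrite theta_coords Ex.
congr (ratr _ + ratr _ * _); last by rewrite -En; field.
apply: (mulfI (x := 2)) => //; rewrite EU (_ : U = 2 * mm + n * d) ?intrD ?intrM; first by field.
by lia.
Qed.

Lemma inOK_theta : inOK d (theta d).
Proof. by apply/OK_Ztheta; exists 0, 1; rewrite mul1r add0r. Qed.

End IntegerRing.

Definition cong1 (d : int) (N : nat) (y : algC) : Prop :=
  exists T, inOK d T /\ y = 1 + N%:R * T.

Definition OK_module (d : int) (I : cset) : Prop :=
  I 0 /\ (forall x y, I x -> I y -> I (x + y)) /\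
  (forall r x, inOK d r -> I x -> I (r * x)).

Definition scaled (I : cset) (x : algC) : cset :=
  fun y => exists z, I z /\ y = x * z.

Section Ideals.
Variable d : int.

Lemma frac_ideal_module A : is_frac_ideal d A -> OK_module d A.
Proof. by case=> _ [A0 [_ [Aadd [Amul _]]]]. Qed.

Lemma scaled_module A x : OK_module d A -> OK_module d (scaled A x).
Proof.
move=> [A0 [Aadd Amul]]; split; first by exists 0; rewrite mulr0.
split.
- by move=> _ _ [z [Az ->]] [z' [Az' ->]]; exists (z + z'); split; [exact: Aadd | ring].
- by move=> r _ hr [z [Az ->]]; exists (r * z); split; [exact: Amul | ring].
Qed.

Lemma imul_integral_sub A C : OK_module d A ->
  (forall c, C c -> inOK d c) -> forall y, imul A C y -> A y.
Proof.
move=> [A0 [Aadd Amul]] Cok y [s [hs ->]].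
elim: s hs => [|p s IH] hs; first by rewrite big_nil.
rewrite big_cons; apply: Aadd; last by apply: IH => q hq; apply: hs; rewrite in_cons hq orbT.
by have [h1 h2] := hs p (mem_head _ _); rewrite mulrC; apply: Amul => //; apply: Cok.
Qed.

Lemma scaled_imul A x y : scaled A x y -> imul A (principal d x) y.
Proof.
move=> [z [Az ->]]; exists [:: (z, x)]; split; last by rewrite big_seq1 mulrC.
move=> p; rewrite mem_seq1 => /eqP -> /=; split => //.
by exists 1; split; [apply: (inOK_int d 1) | rewrite mulr1].
Qed.

Lemma imul_principal A nu : OK_module d A -> imul A (principal d nu) = scaled A nu.
Proof.
move=> Amod; have [A0 [Aadd Amul]] := Amod.
apply: functional_extensionality => y; apply: propositional_extensionality.
split; last exact: scaled_imul.
move=> [s [hs ->]]; elim: s hs => [|p s IH] hs; first by exists 0; rewrite big_nil mulr0.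
have [z [Az Ez]] : scaled A nu (\sum_(q <- s) q.1 * q.2).
  by apply: IH => q hq; apply: hs; rewrite in_cons hq orbT.
have [h1 [r [hr Er]]] := hs p (mem_head _ _).
exists (r * p.1 + z); split; first by apply: Aadd => //; apply: Amul.
by rewrite big_cons Ez Er; ring.
Qed.

Lemma cong1_OK N y : cong1 d N y -> inOK d y.
Proof.
by move=> [T [OT ->]]; apply: inOK_add; [apply: (inOK_int d 1) | apply: inOK_mul => //; apply: (inOK_int d N)].
Qed.

Lemma cong1_mul N x y : cong1 d N x -> cong1 d N y -> cong1 d N (x * y).
Proof.
move=> [Tx [OTx ->]] [Ty [OTy ->]]; exists (Tx + Ty + N%:R * Tx * Ty); split; last by ring.
by do 2?apply: inOK_add => //; do 2?apply: inOK_mul => //; apply: (inOK_int d N).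
Qed.

Lemma coprime_ideal_cong1 N B : (0 < N)%N -> integral_coprime d N B ->
  exists y, B y /\ y != 0 /\ cong1 d N y.
Proof.
move=> Np [[_ [B0 [[z0 [Bz0 z0nz]] [Badd [Bmul _]]]]] [Bok [y [t [By [Ot Eyt]]]]]].
have Nnz : (N%:R : algC) != 0 by rewrite pnatr_eq0; lia.
have Ey : y = 1 + N%:R * (- t) by rewrite mulrN; apply/eqP; rewrite eq_sym subr_eq Eyt.
case: (eqVneq y 0) => [y0|ynz]; last by exists y; do 2!split => //; exists (- t); split => //; apply: inOK_opp.
exists (y + N%:R * z0); split; first by apply: Badd => //; apply: Bmul => //; apply: (inOK_int d N).
split; first by rewrite y0 add0r mulf_neq0.
exists (- t + z0); split; last by rewrite Ey; ring.
by apply: inOK_add; [apply: inOK_opp | apply: Bok].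
Qed.

Lemma cong1_quotient_PK1 N x al : d < 0 -> cong1 d N x -> cong1 d N al ->
  x != 0 -> al != 0 -> in_PK1n d N (principal d (x / al)).
Proof.
move=> dneg cx cal xnz alnz; have [Tx [OTx Ex]] := cx; have [Ta [OTa Eal]] := cal.
have [Kx _] := cong1_OK cx; have [Kal _] := cong1_OK cal.
exists (x / al); split; first exact: inK_div.
split; first by rewrite mulf_neq0 ?invr_eq0.
split => //; exists x, al.
split; first exact: cong1_OK cx.
split; first exact: cong1_OK cal.
do 2!split => //.
split.
  exists 1, (- Ta); split; first exact: (inOK_int d 1).
  by split; [apply: inOK_opp | rewrite Eal; ring].
by exists (Tx - Ta); split; [apply: inOK_add => //; apply: inOK_opp | rewrite Ex Eal; ring].
Qed.

End Ideals.

Section IntegralIdeals.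
Variables (d e : int).
Hypotheses (hd : imag_quad_disc d) (he : 4 * e = d * d - d).
Local Notation theta := (theta d).
Let dneg : d < 0. Proof. by case: hd. Qed.

Lemma cong1_coords N (m n : int) : cong1 d N (m%:~R + n%:~R * theta) ->
  exists t1 t2, m = 1 + N%:Z * t1 /\ n = N%:Z * t2.
Proof.
move=> [T [OT ET]]; have [t1 [t2 Et]] := proj1 (OK_Ztheta hd he T) OT.
exists t1, t2; apply: (theta_coords_uniq dneg); rewrite ET Et.
by rewrite rmorphD rmorphM /= rmorphM /=; ring.
Qed.

Lemma integral_ideal_basis I : OK_module d I -> (forall y, I y -> inOK d y) ->
  (exists y, I y /\ y != 0) ->
  exists g a b c : int, 0 < g /\ 0 < a /\ a * c = b * b + d * b + e /\
    forall y, I y <-> exists p q : int,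
      y = g%:~R * (a%:~R * q%:~R + p%:~R * (b%:~R + theta)).
Proof.
move=> [I0 [Iadd Imul]] Iok [y0 [Iy0 y0nz]].
pose J m n := I (m%:~R + n%:~R * theta).
have Jadd m n m' n' : J m n -> J m' n' -> J (m + m') (n + n').
  by move=> h h'; have := Iadd _ _ h h'; rewrite /J; congr I; rewrite !rmorphD; ring.
have Jscal k m n : J m n -> J (k * m) (k * n).
  by move=> h; have := Imul k%:~R _ (inOK_int d k) h; rewrite /J; congr I; rewrite !rmorphM; ring.
have Jtheta m n : J m n -> J (- (n * e)) (m + n * d).
  move=> h; have := Imul theta _ (inOK_theta hd he) h; rewrite /J; congr I.
  by rewrite mulrDr mulrCA (theta_sqr he) !(rmorphN, rmorphD, rmorphM); ring.
have Jnz : exists m n, J m n /\ (m != 0 \/ n != 0).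
  have [m [n Ey0]] := proj1 (OK_Ztheta hd he y0) (Iok _ Iy0).
  exists m, n; split; first by rewrite /J -Ey0.
  case: (eqVneq m 0) => [m0|]; last by left.
  case: (eqVneq n 0) => [n0|]; last by right.
  by move: y0nz; rewrite Ey0 m0 n0 mul0r addr0 eqxx.
have [g [a [b [c [gp [ap [Ec Jcoords]]]]]]] := ideal_coords_structure he dneg Jadd Jscal Jtheta Jnz.
exists g, a, b, c; split => //; split => //; split => // y; split.
- move=> Iy; have [m [n Ey]] := proj1 (OK_Ztheta hd he y) (Iok _ Iy).
  have Jmn : J m n by rewrite /J -Ey.
  have [p [q [Em En]]] := proj1 (Jcoords m n) Jmn.
  by exists p, q; rewrite Ey Em En !rmorphM rmorphD !rmorphM; ring.
- move=> [p [q ->]].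
  have := proj2 (Jcoords _ _) (ex_intro _ p (ex_intro _ q (conj erefl erefl))).
  by rewrite /J; congr I; rewrite !rmorphM rmorphD !rmorphM; ring.
Qed.

Lemma integral_multiple N A : (0 < N)%N -> in_IKn d N A ->
  exists x u : algC, x != 0 /\ cong1 d N x /\ OK_module d (scaled A x) /\
    (forall y, scaled A x y -> inOK d y) /\
    scaled A x u /\ u != 0 /\ cong1 d N u.
Proof.
move=> Np [Afrac [B [C [hB [hC EAC]]]]].
have Amod := frac_ideal_module Afrac.
have [x [Cx [xnz cx]]] := coprime_ideal_cong1 Np hC.
have [b [Bb [bnz cb]]] := coprime_ideal_cong1 Np hB.
have [_ [Cok _]] := hC; have [_ [Bok _]] := hB.
have Ab : A b by apply: (imul_integral_sub Amod Cok); rewrite EAC.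
exists x, (x * b); do 2!split => //; split; first exact: scaled_module.
split.
  move=> _ [z [Az ->]]; apply: Bok; rewrite -EAC; exists [:: (z, x)].
  by split; [move=> p; rewrite mem_seq1 => /eqP -> | rewrite big_seq1 mulrC].
split; first by exists b.
by split; [rewrite mulf_neq0 | apply: cong1_mul].
Qed.

End IntegralIdeals.

Definition disc (Q : bqf) : int := fb Q ^+ 2 - 4 * fa Q * fc Q.

Definition mxdet2 (g : 'M[int]_2) : int := g00 g * g11 g - g01 g * g10 g.

Lemma form_act_disc Q g : disc (form_act Q g) = mxdet2 g ^+ 2 * disc Q.
Proof. by rewrite /disc /mxdet2 /form_act /fa /fb /fc /=; ring. Qed.

Definition mx22 (p q r s : int) : 'M[int]_2 :=
  \matrix_(i, j) if i == ord0 then (if j == ord0 then p else q)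
                 else (if j == ord0 then r else s).

Lemma mx22_entries p q r s :
  [/\ g00 (mx22 p q r s) = p, g01 (mx22 p q r s) = q,
      g10 (mx22 p q r s) = r & g11 (mx22 p q r s) = s].
Proof. by rewrite /g00 /g01 /g10 /g11 !mxE. Qed.

Lemma mx22_det p q r s : mxdet2 (mx22 p q r s) = p * s - q * r.
Proof. by have [e00 e01 e10 e11] := mx22_entries p q r s; rewrite /mxdet2 e00 e01 e10 e11. Qed.

(* If omega is a root of a X^2 + b X + c with w = 2 a omega + b, then
   (-B' + w) / 2 A' = (s omega - q) / (p - r omega) for the transformed
   coefficients A' = Q(p, r), B' of Q^g, g = [[p, q], [r, s]] in SL_2. *)
Lemma moebius_root (F : fieldType) (a b c p q r s om w : F) :
  a * om ^+ 2 + b * om + c = 0 -> w = 2 * a * om + b -> p * s - q * r = 1 ->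
  2 * (a * p ^+ 2 + b * p * r + c * r ^+ 2) != 0 -> p - r * om != 0 ->
  (- (2 * a * p * q + b * (p * s + q * r) + 2 * c * r * s) + w)
    / (2 * (a * p ^+ 2 + b * p * r + c * r ^+ 2)) = (s * om - q) / (p - r * om).
Proof.
move=> root_om Ew det1 nzA nzD; apply/eqP; rewrite eqr_div // Ew -subr_eq0; apply/eqP.
transitivity (- 2 * r * (a * om ^+ 2 + b * om + c)
  + (1 - (p * s - q * r)) * ((b * r + 2 * a * p) * om + b * p + 2 * c * r)); first by ring.
by rewrite root_om det1 subrr !mul0r mulr0 addr0.
Qed.

(* A positive definite form stays positive definite under SL_2(Z), since its
   leading coefficient Q(p, r) is a value at a nonzero vector. *)
Lemma form_act_pos Q g : disc Q < 0 -> 0 < fa Q -> mxdet2 g = 1 ->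
  0 < fa (form_act Q g).
Proof.
rewrite /disc /mxdet2 /form_act /fa /fb /fc /= => dneg ap det1.
set p := g00 g; set r := g10 g; rewrite -/p -/r in det1.
set A' := _ + _ + _.
have h4 : 4 * Q.1.1 * A' = (2 * Q.1.1 * p + Q.1.2 * r) ^+ 2 - (Q.1.2 ^+ 2 - 4 * Q.1.1 * Q.2) * r ^+ 2.
  by rewrite /A'; ring.
have sq : 0 <= (2 * Q.1.1 * p + Q.1.2 * r) ^+ 2 by rewrite sqr_ge0.
case: (eqVneq r 0) => [r0 | rnz].
  have pnz : p != 0 by apply/eqP => p0; move: det1; rewrite p0 r0; lia.
  have : 0 < p * p by case: (ltrgt0P p) pnz => // h _; nia.
  by move: h4; rewrite r0; nia.
have : 0 < r * r by case: (ltrgt0P r) rnz => // h _; nia.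
by nia.
Qed.

Section FormRoots.
Variable d : int.
Hypothesis dneg : d < 0.
Variables a b c : int.
Hypotheses (discQ : b ^+ 2 - 4 * a * c = d) (ap : 0 < a).
Local Notation om := (omegaQ d (a, b, c)).

Let anz : a%:~R != 0 :> algC.
Proof. by rewrite intr_eq0 gt_eqF. Qed.

Lemma omegaQ_sqd : sqd d = 2 * a%:~R * om + b%:~R.
Proof. by rewrite /omegaQ /fa /fb /= intrM; field. Qed.

Lemma omegaQ_root : a%:~R * om ^+ 2 + b%:~R * om + c%:~R = 0.
Proof.
have h4 : 4 * a%:~R != 0 :> algC by apply: mulf_neq0; rewrite ?pnatr_eq0.
apply: (mulfI h4).
transitivity ((2 * a%:~R * om + b%:~R) ^+ 2 - (b ^+ 2 - 4 * a * c)%:~R :> algC); first by ring.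
by rewrite -omegaQ_sqd discQ expr2 sqd_sqr subrr mulr0.
Qed.

(* omega_Q is not rational, so p - r omega_Q vanishes only for p = r = 0. *)
Lemma omegaQ_denom_neq0 (p r : int) : p != 0 \/ r != 0 ->
  p%:~R - r%:~R * om != 0.
Proof.
move=> nz; apply/eqP => D0.
case: (eqVneq r 0) => [r0 | rnz].
  by move: D0 nz; rewrite r0 mul0r subr0 => /eqP; rewrite intr_eq0 => /eqP ->; case.
have rnz' : r%:~R != 0 :> algC by rewrite intr_eq0.
have Eom : om = ratr (p%:~R / r%:~R).
  rewrite fmorph_div /= !ratr_int; apply: (mulfI rnz'); rewrite [RHS]mulrCA divff // mulr1.
  by apply/eqP; rewrite eq_sym -subr_eq0 D0.
have := sqd_irrational dneg (2 * a%:~R * (p%:~R / r%:~R) + b%:~R).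
by rewrite omegaQ_sqd Eom !(rmorphD, rmorphM) /= !ratr_int rmorph1 eqxx.
Qed.

Lemma omegaQ_form_act g : mxdet2 g = 1 ->
  omegaQ d (form_act (a, b, c) g) =
  ((g11 g)%:~R * om - (g01 g)%:~R) / ((g00 g)%:~R - (g10 g)%:~R * om).
Proof.
move=> det1.
have neg : disc (a, b, c) < 0 by rewrite /disc /fa /fb /fc /= discQ.
have pos := form_act_pos neg ap det1.
have Dnz : (g00 g)%:~R - (g10 g)%:~R * om != 0.
  apply: omegaQ_denom_neq0; case: (eqVneq (g00 g) 0) => [p0|]; last by left.
  by right; apply/eqP => r0; move: det1; rewrite /mxdet2 p0 r0; lia.
move: pos Dnz det1; rewrite /mxdet2 /form_act /fa /fb /=.
move: (g00 g) (g01 g) (g10 g) (g11 g) => p q r s pos Dnz det1.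
rewrite -(moebius_root omegaQ_root omegaQ_sqd _ _ Dnz).
- by rewrite /omegaQ /fa /fb /=; congr (_ / _); ring.
- by have := congr1 (fun z : int => z%:~R : algC) det1; rewrite /= intrB !intrM.
- have : (a * p ^+ 2 + b * p * r + c * r ^+ 2)%:~R != 0 :> algC.
    by rewrite intr_eq0 gt_eqF.
  rewrite !(rmorphD, rmorphM, rmorphXn) /= => h.
  by apply: mulf_neq0 => //; rewrite pnatr_eq0.
Qed.

End FormRoots.

Lemma scaled_scaled (I : cset) x y : scaled (scaled I x) y = scaled I (y * x).
Proof.
apply: functional_extensionality => z; apply: propositional_extensionality; split.
- by move=> [_ [[t [It ->]] ->]]; exists t; split => //; rewrite mulrA.
- by move=> [t [It ->]]; exists (x * t); split; [exists t | rewrite mulrA].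
Qed.

Lemma lattice1_moebius (p q r s : int) (om : algC) :
  p * s - q * r = 1 -> p%:~R - r%:~R * om != 0 ->
  lattice1 ((s%:~R * om - q%:~R) / (p%:~R - r%:~R * om)) =
  scaled (lattice1 om) (p%:~R - r%:~R * om)^-1.
Proof.
move=> det1 Dnz; set D := p%:~R - r%:~R * om.
have det1C : p%:~R * s%:~R - q%:~R * r%:~R = 1 :> algC.
  by have := congr1 (fun z : int => z%:~R : algC) det1; rewrite /= intrB !intrM.
apply: functional_extensionality => X; apply: propositional_extensionality; split.
- move=> [m [n ->]]; exists ((m * s - n * r)%:~R * om + (n * p - m * q)%:~R); split.
    by exists (m * s - n * r), (n * p - m * q).
  by rewrite /D; field.
- move=> [_ [[k [l ->]] ->]]; exists (k * p + l * r), (k * q + l * s).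
  transitivity (D^-1 * ((k%:~R * om + l%:~R) * (p%:~R * s%:~R - q%:~R * r%:~R))).
    by rewrite det1C mulr1.
  by rewrite /D; field.
Qed.

(* If g (a q + b p) = 1 and g p = 0 mod N, then g a q = 1 mod N: g is a unit
   mod N, hence N divides p. *)
Lemma unit_q_coordinate (g a b p q t1 t2 N : int) :
  g * (a * q + b * p) = 1 + N * t1 -> g * p = N * t2 ->
  exists k, g * a * q = 1 + N * k.
Proof.
move=> h1 h2.
have cop : coprimez N g.
  by apply: (@bezout_coprimez _ _ (- t1) (a * q + b * p)); rewrite [_ * g]mulrC h1; ring.
have : (N %| g * p)%Z by rewrite h2 dvdz_mulr.
rewrite Gauss_dvdzr // => /dvdzP [p1 Ep1].
exists (t1 - g * b * p1).
have -> : g * a * q = g * (a * q + b * p) - g * b * p by ring.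
by rewrite h1 Ep1; ring.
Qed.

Lemma leading_coprime (g a q N k t : int) :
  g * a * q = 1 + N * k -> gcdz N (a * q ^+ 2 + N * t) = 1.
Proof.
move=> Hk; apply/eqP.
apply: (@bezout_coprimez _ _ (- (g * g * a * t + k * (g * a * q + 1))) (g * g * a)).
apply/eqP; rewrite -subr_eq0; apply/eqP.
transitivity ((g * a * q - (1 + N * k)) * (g * a * q + 1)); first by ring.
by rewrite Hk subrr mul0r.
Qed.

Lemma moved_form_in_QNd (d : int) (N : nat) (a b c g q0 k : int) :
  imag_quad_disc d -> b ^+ 2 - 4 * a * c = d -> 0 < a ->
  g * a * q0 = 1 + N%:Z * k ->
  in_QNd d N (form_act (a, b, c) (mx22 q0 (- k) (- N%:Z) (g * a))).
Proof.
move=> hd discQ ap Hk.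
have [e00 _ e10 _] := mx22_entries q0 (- k) (- N%:Z) (g * a).
have det1 : mxdet2 (mx22 q0 (- k) (- N%:Z) (g * a)) = 1.
  by rewrite mx22_det mulrC Hk; ring.
have disc1 : disc (form_act (a, b, c) (mx22 q0 (- k) (- N%:Z) (g * a))) = d.
  by rewrite form_act_disc det1 /disc /fa /fb /fc /= discQ; ring.
split; first split; [exact: disc1 | split | ].
- by apply: form_act_pos det1; rewrite // /disc /fa /fb /fc /= discQ; case: hd.
- exact: disc_form_primitive hd disc1.
rewrite /form_act /fa /= e00 e10.
have -> : a * q0 ^+ 2 + b * q0 * - N%:Z + c * (- N%:Z) ^+ 2 =
  a * q0 ^+ 2 + N%:Z * (c * N%:Z - b * q0) by ring.
exact: leading_coprime Hk.
Qed.

Lemma scaled_transfer (A L : cset) (x c y : algC) :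
  scaled A x = scaled L c -> c != 0 -> scaled L y = scaled A (y / c * x).
Proof. by move=> EAL cnz; rewrite -scaled_scaled EAL scaled_scaled divfK. Qed.

Section Surjectivity.
Variables (d e : int).
Hypotheses (hd : imag_quad_disc d) (he : 4 * e = d * d - d).
Local Notation theta := (theta d).

Lemma theta_shift_form (a b c : int) : 0 < a -> a * c = b * b + d * b + e ->
  (- (2 * b + d)) ^+ 2 - 4 * a * c = d /\
  b%:~R + theta = a%:~R * omegaQ d (a, - (2 * b + d), c).
Proof.
move=> ap Ec; split; first by rewrite -mulrA Ec; lia.
have anz : a%:~R != 0 :> algC by rewrite intr_eq0 gt_eqF.
by rewrite /omegaQ /theta /fa /fb /=; field.
Qed.

Lemma integral_ideal_lattice I : OK_module d I -> (forall y, I y -> inOK d y) ->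
  (exists y, I y /\ y != 0) ->
  exists g a b c : int, 0 < a /\ (- (2 * b + d)) ^+ 2 - 4 * a * c = d /\
    b%:~R + theta = a%:~R * omegaQ d (a, - (2 * b + d), c) /\ (g * a)%:~R != 0 :> algC /\
    I = scaled (lattice1 (omegaQ d (a, - (2 * b + d), c))) (g * a)%:~R.
Proof.
move=> Imod Iok Inz.
have [g [a [b [c [gp [ap [Ec Icoords]]]]]]] := integral_ideal_basis hd he Imod Iok Inz.
have [disc0 Eom] := theta_shift_form ap Ec.
exists g, a, b, c; do 3!split => //; split; first by rewrite intr_eq0 mulf_neq0 // gt_eqF.
apply: functional_extensionality => y; apply: propositional_extensionality.
rewrite Icoords Eom; split.
- by move=> [p [q ->]]; exists (p%:~R * omegaQ d (a, - (2 * b + d), c) + q%:~R); split; [exists p, q | rewrite intrM; ring].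
- by move=> [_ [[p [q ->]] ->]]; exists p, q; rewrite intrM; ring.
Qed.

Lemma lattice_unit_coordinate N (g a b p q : int) (om : algC) :
  b%:~R + theta = a%:~R * om ->
  cong1 d N ((g * a)%:~R * (p%:~R * om + q%:~R)) ->
  exists k, g * a * q = 1 + N%:Z * k.
Proof.
move=> Eom cu.
have [t1 [t2 [E1 E2]]] : exists t1 t2, g * (a * q + b * p) = 1 + N%:Z * t1 /\ g * p = N%:Z * t2.
  apply: (cong1_coords hd he).
  have -> : (g * (a * q + b * p))%:~R + (g * p)%:~R * theta =
      (g * a)%:~R * (p%:~R * om + q%:~R) :> algC.
    transitivity (g%:~R * (p%:~R * (b%:~R + theta) + a%:~R * q%:~R) : algC); first by ring.
    by rewrite Eom; ring.
  exact: cu.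
exact: unit_q_coordinate E1 E2.
Qed.

Lemma denominator_cong1 N (g a b q0 k : int) (om : algC) :
  b%:~R + theta = a%:~R * om -> g * a * q0 = 1 + N%:Z * k ->
  cong1 d N ((g * a)%:~R * (q0%:~R - (- N%:Z)%:~R * om)).
Proof.
move=> Eom Hk; exists (k%:~R + g%:~R * (b%:~R + theta)); split.
  apply: inOK_add; first exact: inOK_int.
  by apply: inOK_mul; [exact: inOK_int | apply: inOK_add; [exact: inOK_int | exact: inOK_theta hd he]].
rewrite Eom; transitivity ((g * a * q0)%:~R + N%:R * (g%:~R * (a%:~R * om)) :> algC).
  by rewrite rmorphN /= !rmorphM; ring.
by rewrite Hk rmorphD rmorphM /=; ring.
Qed.

End Surjectivity.

Unset Implicit Arguments.

Theorem proposition2p3 (d : int) (N : nat) (P : cset -> Prop)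
    (G : 'M[int]_2 -> Prop) :
  imag_quad_disc d -> (0 < N)%N ->
  ideal_subgroup d N P ->
  (forall A, in_PK1n d N A -> P A) ->
  (forall A, P A -> in_PKn d N A) ->
  SL2_subgroup G ->
  (* phi_Gamma is well defined *)
  (forall Q Q', in_QNd d N Q -> in_QNd d N Q' -> equivG G Q Q' ->
     exists B, P B /\ lattice1 (omegaQ d Q') = imul (lattice1 (omegaQ d Q)) B) ->
  (* phi_Gamma is surjective *)
  forall A, in_IKn d N A ->
    exists Q, in_QNd d N Q /\
      exists B, P B /\ lattice1 (omegaQ d Q) = imul A B.
Proof.
move=> hd Np _ PK1_sub _ _ _ A hA.
have dneg : d < 0 by case: hd.
have [e he] := disc_theta_norm hd.
have [x [u [xnz [cx [Imod [Iok [Iu [unz cu]]]]]]]] := integral_multiple Np hA.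
have [g [a [b [c [ap [disc0 [Eom [ganz EI]]]]]]]] :=
  integral_ideal_lattice hd he Imod Iok (ex_intro _ u (conj Iu unz)).
set om := omegaQ d (a, - (2 * b + d), c) in Eom EI *.
have [_ [[p0 [q0 ->]] Eu]] : scaled (lattice1 om) (g * a)%:~R u by rewrite -EI.
have cu' : cong1 d N ((g * a)%:~R * (p0%:~R * om + q0%:~R)) by rewrite -Eu.
have [k Hk] := lattice_unit_coordinate hd he Eom cu'.
set gam := mx22 q0 (- k) (- N%:Z) (g * a).
have det1 : q0 * (g * a) - (- k) * (- N%:Z) = 1 by rewrite mulrC Hk; ring.
set D := q0%:~R - (- N%:Z)%:~R * om.
have Dnz : D != 0 by apply: omegaQ_denom_neq0 => //; right; rewrite oppr_eq0; lia.
exists (form_act (a, - (2 * b + d), c) gam); split; first exact: moved_form_in_QNd.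
exists (principal d (x / ((g * a)%:~R * D))); split.
  apply/PK1_sub/cong1_quotient_PK1 => //; last by rewrite mulf_neq0.
  by move: (denominator_cong1 hd he Eom Hk).
have [e00 e01 e10 e11] := mx22_entries q0 (- k) (- N%:Z) (g * a).
rewrite omegaQ_form_act // ?mx22_det // e00 e01 e10 e11 lattice1_moebius //.
rewrite imul_principal; last exact: frac_ideal_module hA.1.
rewrite (scaled_transfer _ EI ganz); congr scaled.
by rewrite [RHS]mulrC invfM (mulrC (_^-1)).
Qed.
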